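(* Let $A,\hat A^0,\tilde A\in\mathbb{R}^{d\times k}$ with columns $a_i,\hat a^0_i,\tilde a_i$, and let $\eta_0,\eta_1>0$, $r:=\eta_0\sqrt k/d$, $\tau:=\eta_1\sqrt{k/d}$. Suppose $\|A\|\le\tau$, $\|\hat A^0\|\le\tau$, and $\|\hat a^0_i-a_i\|\le r$ for all $i$. Let $\tilde A=UDV^\top$ be an SVD, $\hat D$ the diagonal matrix with $\hat D_{ii}=\min\{D_{ii},\tau\}$, $Q:=U\hat DV^\top$ with columns $Q_i$, and define $\hat A$ column-wise by $\hat a_i=Q_i$ if $\|Q_i-\hat a^0_i\|\le r$, and $\hat a_i=\hat a^0_i+r\frac{Q_i-\hat a^0_i}{\|Q_i-\hat a^0_i\|}$ otherwise. Then $\|\hat A-A\|_F\le 2\|\tilde A-A\|_F$, $\|\hat a_i-a_i\|\le 2r$ for all $i$, and $\|\hat A\|\le 3\tau$.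
   Context: $\|\cdot\|$ is the spectral norm and $\|\cdot\|_F$ the Frobenius norm. *)

From HB Require Import structures.
From mathcomp Require Import all_boot all_order all_algebra.
Set Implicit Arguments. Unset Strict Implicit. Unset Printing Implicit Defensive.
Import Order.TTheory GRing.Theory Num.Theory.
Local Open Scope ring_scope.

Definition vnorm (R : rcfType) (n : nat) (v : 'cV[R]_n) : R :=
  Num.sqrt (\sum_(i < n) v i 0 ^+ 2).

Definition frob (R : rcfType) (m n : nat) (M : 'M[R]_(m, n)) : R :=
  Num.sqrt (\sum_(i < m) \sum_(j < n) M i j ^+ 2).

(* "spectral norm of M is at most c": ||M|| = sup_{x<>0} |Mx|/|x| <= c *)
Definition specnorm_le (R : rcfType) (m n : nat) (M : 'M[R]_(m, n)) (c : R) : Prop :=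
  forall x : 'cV[R]_n, vnorm (M *m x) <= c * vnorm x.

Definition orth_mx (R : rcfType) (n : nat) (U : 'M[R]_n) : Prop :=
  U *m U^T = 1%:M /\ U^T *m U = 1%:M.

Definition nonneg_diag (R : rcfType) (m n : nat) (D : 'M[R]_(m, n)) : Prop :=
  (forall i j, nat_of_ord i <> nat_of_ord j -> D i j = 0) /\
  (forall i j, nat_of_ord i = nat_of_ord j -> 0 <= D i j).

Definition clip_diag (R : rcfType) (m n : nat) (D : 'M[R]_(m, n)) (tau : R) : 'M[R]_(m, n) :=
  \matrix_(i, j) (if nat_of_ord i == nat_of_ord j then Num.min (D i j) tau else 0).

Definition radius (R : rcfType) (d k : nat) (eta0 : R) : R :=
  eta0 * Num.sqrt (k%:R) / d%:R.
Definition tauv (R : rcfType) (d k : nat) (eta1 : R) : R :=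
  eta1 * Num.sqrt (k%:R / d%:R).

Definition proj_cols (R : rcfType) (d k : nat) (Q A0 : 'M[R]_(d, k)) (r : R) : 'M[R]_(d, k) :=
  \matrix_(i, j)
    (let q := col j Q in let a := col j A0 in
     if vnorm (q - a) <= r then q i 0
     else (a + (r / vnorm (q - a)) *: (q - a)) i 0).

From HB Require Import structures.
From mathcomp Require Import all_boot all_order all_algebra.
From mathcomp Require Import ring lra.
Set Implicit Arguments. Unset Strict Implicit. Unset Printing Implicit Defensive.
Import Order.TTheory GRing.Theory Num.Theory.
Local Open Scope ring_scope.

(* In the singular bases of [At = U D V^T] the target A becomes [B = U^T A V],
   whose entries are bounded by [||A|| <= tau]; clipping a diagonal entry of D
   at tau therefore moves it towards the corresponding entry of B, so
   [||Q - A||_F <= ||At - A||_F].  Projecting a column of Q onto the ball of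
   radius r around the column of A0, which contains the column of A, brings it
   no farther from that column, so even [||Ah - A||_F <= ||At - A||_F].  The
   column bound is the triangle inequality through A0, and writing
   [Ah = A0 + (Q - A0) Lambda] with Lambda diagonal with entries in [0, 1]
   gives [||Ah|| <= tau + 2 tau]. *)

Section EuclideanNorms.
Variable R : rcfType.

Definition vnorm2 n (v : 'cV[R]_n) : R := \sum_(i < n) v i 0 ^+ 2.
Definition vdot n (u v : 'cV[R]_n) : R := \sum_(i < n) u i 0 * v i 0.
Definition frob2 m n (M : 'M[R]_(m, n)) : R := \sum_(i < m) \sum_(j < n) M i j ^+ 2.

Lemma vnorm2_ge0 n (v : 'cV[R]_n) : 0 <= vnorm2 v.
Proof. by apply: sumr_ge0 => i _; rewrite sqr_ge0. Qed.

Lemma frob2_ge0 m n (M : 'M[R]_(m, n)) : 0 <= frob2 M.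
Proof. by apply: sumr_ge0 => i _; apply: sumr_ge0 => j _; rewrite sqr_ge0. Qed.

Lemma vnorm_ge0 n (v : 'cV[R]_n) : 0 <= vnorm v.
Proof. exact: sqrtr_ge0. Qed.

Lemma sqr_vnorm n (v : 'cV[R]_n) : vnorm v ^+ 2 = vnorm2 v.
Proof. by rewrite sqr_sqrtr // vnorm2_ge0. Qed.

Lemma vnorm_le_sqr n p (u : 'cV[R]_n) (v : 'cV[R]_p) c : 0 <= c ->
  vnorm2 u <= c ^+ 2 * vnorm2 v -> vnorm u <= c * vnorm v.
Proof.
move=> c0 h; rewrite -ler_sqr ?nnegrE ?mulr_ge0 ?vnorm_ge0 //.
by rewrite exprMn !sqr_vnorm.
Qed.

Lemma vnorm2_lincomb n (x y : R) (u v : 'cV[R]_n) :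
  vnorm2 (x *: u + y *: v) = x ^+ 2 * vnorm2 u + 2 * x * y * vdot u v + y ^+ 2 * vnorm2 v.
Proof.
rewrite /vnorm2 /vdot !mulr_sumr -!big_split /=.
by apply: eq_bigr => i _; rewrite !mxE; ring.
Qed.

Lemma vnorm2_eq0 n (v : 'cV[R]_n) i : vnorm2 v = 0 -> v i 0 = 0.
Proof.
move=> h; apply/eqP; rewrite -sqrf_eq0; apply/eqP.
by apply: (psumr_eq0P _ h) => // j _; rewrite sqr_ge0.
Qed.

Lemma vdot_le n (u v : 'cV[R]_n) : vdot u v <= vnorm u * vnorm v.
Proof.
have [u0|u0] := eqVneq (vnorm2 u) 0.
  by rewrite /vdot big1 ?mulr_ge0 ?vnorm_ge0 // => i _; rewrite vnorm2_eq0 ?mul0r.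
have [v0|v0] := eqVneq (vnorm2 v) 0.
  by rewrite /vdot big1 ?mulr_ge0 ?vnorm_ge0 // => i _; rewrite (vnorm2_eq0 _ v0) mulr0.
have a0 : 0 < vnorm u by rewrite sqrtr_gt0 lt_def u0 vnorm2_ge0.
have b0 : 0 < vnorm v by rewrite sqrtr_gt0 lt_def v0 vnorm2_ge0.
(* expand [0 <= | |v| u - |u| v |^2] *)
have := vnorm2_ge0 (vnorm v *: u + (- vnorm u) *: v).
rewrite vnorm2_lincomb -!sqr_vnorm.
have := mulr_gt0 a0 b0; move: (vnorm u) (vnorm v) (vdot u v) => a b x; nra.
Qed.

Lemma vnormD_le n (u v : 'cV[R]_n) : vnorm (u + v) <= vnorm u + vnorm v.
Proof.
rewrite -ler_sqr ?nnegrE ?addr_ge0 ?vnorm_ge0 // -[u]scale1r -[v]scale1r.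
rewrite sqr_vnorm vnorm2_lincomb !scale1r -!sqr_vnorm.
have := vdot_le u v; nra.
Qed.

Lemma vnormZ n c (v : 'cV[R]_n) : vnorm (c *: v) = `|c| * vnorm v.
Proof.
have -> : c *: v = c *: v + 0 *: v by rewrite scale0r addr0.
rewrite /vnorm -/(vnorm2 _) vnorm2_lincomb !expr0n /= mulr0 mul0r !addr0.
by rewrite sqrtrM ?sqr_ge0 // sqrtr_sqr.
Qed.

Lemma vnormN n (v : 'cV[R]_n) : vnorm (- v) = vnorm v.
Proof. by rewrite -scaleN1r vnormZ normrN normr1 mul1r. Qed.

Lemma vnorm_subC n (u v : 'cV[R]_n) : vnorm (u - v) = vnorm (v - u).
Proof. by rewrite -vnormN opprB. Qed.

Lemma normr_entry_le_vnorm n (v : 'cV[R]_n) i : `|v i 0| <= vnorm v.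
Proof.
rewrite -sqrtr_sqr ler_sqrt ?vnorm2_ge0 // /vnorm2 (bigD1 i) //= lerDl.
by apply: sumr_ge0 => j _; rewrite sqr_ge0.
Qed.

Lemma vnorm2E n (v : 'cV[R]_n) : vnorm2 v = (v^T *m v) 0 0.
Proof. by rewrite mxE; apply: eq_bigr => i _; rewrite mxE expr2. Qed.

Lemma frob2E m n (M : 'M[R]_(m, n)) : frob2 M = \tr (M *m M^T).
Proof.
apply: eq_bigr => i _; rewrite mxE; apply: eq_bigr => j _.
by rewrite mxE expr2.
Qed.

Lemma frob2_col m n (M : 'M[R]_(m, n)) : frob2 M = \sum_(j < n) vnorm2 (col j M).
Proof.
rewrite /frob2 exchange_big; apply: eq_bigr => j _; apply: eq_bigr => i _.
by rewrite mxE.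
Qed.

Lemma vnorm2_orthmx n (W : 'M[R]_n) (v : 'cV[R]_n) :
  W^T *m W = 1%:M -> vnorm2 (W *m v) = vnorm2 v.
Proof. by move=> hW; rewrite !vnorm2E trmx_mul mulmxA -(mulmxA _ W^T) hW mulmx1. Qed.

Lemma frob2_orthmxl m n (W : 'M[R]_m) (M : 'M[R]_(m, n)) :
  W^T *m W = 1%:M -> frob2 (W *m M) = frob2 M.
Proof.
by move=> hW; rewrite !frob2E trmx_mul mulmxA mxtrace_mulC !mulmxA hW mul1mx.
Qed.

Lemma frob2_orthmxr m n (W : 'M[R]_n) (M : 'M[R]_(m, n)) :
  W *m W^T = 1%:M -> frob2 (M *m W) = frob2 M.
Proof. by move=> hW; rewrite !frob2E trmx_mul !mulmxA -(mulmxA M) hW mulmx1. Qed.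

End EuclideanNorms.

Section SpectralNorm.
Variable R : rcfType.

Lemma sqr_sum_orth (I : finType) (f : I -> R) :
  (forall i j, i != j -> f i * f j = 0) -> (\sum_i f i) ^+ 2 = \sum_i f i ^+ 2.
Proof.
move=> hf; rewrite expr2 mulr_suml; apply: eq_bigr => i _.
rewrite mulr_sumr (bigD1 i) //= big1 ?addr0 ?expr2 // => j ji.
by apply: hf; rewrite eq_sym.
Qed.

Lemma sum_sqr_orth_le (I : finType) (f : I -> R) c :
  (forall i j, i != j -> f i * f j = 0) -> (forall i, `|f i| <= c) ->
  \sum_i f i ^+ 2 <= c ^+ 2.
Proof.
move=> hf hc; case: (pickP (fun i => f i != 0)) => [i0 /= fi0|f0]; last first.
  by rewrite big1 ?sqr_ge0 // => i _; move/negbFE/eqP: (f0 i) ->; rewrite expr0n.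
rewrite (bigD1 i0) //= big1 ?addr0 => [|i hi]; last first.
  have /(hf i0 i)/eqP : i0 != i by rewrite eq_sym.
  by rewrite mulf_eq0 (negbTE fi0) => /eqP ->; rewrite expr0n.
by have := hc i0; rewrite ler_norml => /andP[]; nra.
Qed.

Lemma specnorm_le_sparse m n (M : 'M[R]_(m, n)) (c : R) : 0 <= c ->
  (forall i j j', j != j' -> M i j * M i j' = 0) ->
  (forall i i' j, i != i' -> M i j * M i' j = 0) ->
  (forall i j, `|M i j| <= c) -> specnorm_le M c.
Proof.
move=> c0 hrow hcol hM x; apply: vnorm_le_sqr => //.
have -> : vnorm2 (M *m x) = \sum_j x j 0 ^+ 2 * \sum_i M i j ^+ 2.
  transitivity (\sum_i \sum_j (M i j * x j 0) ^+ 2).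
    apply: eq_bigr => i _; rewrite mxE sqr_sum_orth // => j j' jj'.
    by rewrite mulrACA hrow ?mul0r.
  rewrite exchange_big; apply: eq_bigr => j _; rewrite mulr_sumr.
  by apply: eq_bigr => i _; rewrite exprMn mulrC.
rewrite /vnorm2 mulr_sumr; apply: ler_sum => j _; rewrite mulrC ler_wpM2r ?sqr_ge0 //.
by apply: sum_sqr_orth_le => [i i'|i]; [apply: hcol | apply: hM].
Qed.

Lemma vnorm_delta n (j : 'I_n) : vnorm (delta_mx j 0 : 'cV[R]_n) = 1.
Proof.
rewrite /vnorm (bigD1 j) //= big1 ?addr0 ?mxE ?eqxx ?expr1n ?sqrtr1 //.
by move=> i /negbTE ij; rewrite mxE ij expr0n.
Qed.

Lemma normr_entry_le_specnorm m n (M : 'M[R]_(m, n)) c i j :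
  specnorm_le M c -> `|M i j| <= c.
Proof.
move=> /(_ (delta_mx j 0)); rewrite vnorm_delta mulr1 -colE.
apply: le_trans; have -> : M i j = col j M i 0 by rewrite mxE.
exact: normr_entry_le_vnorm.
Qed.

Lemma specnorm_leD m n (M N : 'M[R]_(m, n)) a b :
  specnorm_le M a -> specnorm_le N b -> specnorm_le (M + N) (a + b).
Proof.
move=> hM hN x; rewrite mulmxDl mulrDl.
exact: le_trans (vnormD_le _ _) (lerD (hM x) (hN x)).
Qed.

Lemma specnorm_leN m n (M : 'M[R]_(m, n)) a :
  specnorm_le M a -> specnorm_le (- M) a.
Proof. by move=> hM x; rewrite mulNmx vnormN. Qed.

Lemma specnorm_le_mulmx m n p (M : 'M[R]_(m, n)) (N : 'M[R]_(n, p)) a b : 0 <= a ->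
  specnorm_le M a -> specnorm_le N b -> specnorm_le (M *m N) (a * b).
Proof.
move=> a0 hM hN x; rewrite -mulmxA -mulrA.
exact: le_trans (hM _) (ler_wpM2l a0 (hN x)).
Qed.

Lemma specnorm_le_orthmx n (W : 'M[R]_n) : W^T *m W = 1%:M -> specnorm_le W 1.
Proof. by move=> hW x; rewrite mul1r /vnorm -!/(vnorm2 _) vnorm2_orthmx. Qed.

Lemma specnorm_le_diag_mx n (l : 'rV[R]_n) (c : R) : 0 <= c ->
  (forall j, `|l 0 j| <= c) -> specnorm_le (diag_mx l) c.
Proof.
move=> c0 hl; apply: specnorm_le_sparse => // [i j j' jj'|i i' j ii'|i j].
- rewrite !mxE; have [ij|_] := eqVneq i j; last by rewrite mulr0n mul0r.
  by subst j; rewrite (negbTE jj') mulr0n mulr0.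
- rewrite !mxE; have [ij|_] := eqVneq i j; last by rewrite mulr0n mul0r.
  by subst j; rewrite eq_sym (negbTE ii') mulr0n mulr0.
- by rewrite mxE; case: (i == j); rewrite ?mulr1n ?mulr0n ?normr0.
Qed.

Lemma specnorm_le_clip_diag m n (D : 'M[R]_(m, n)) (tau : R) : nonneg_diag D -> 0 <= tau ->
  specnorm_le (clip_diag D tau) tau.
Proof.
move=> [_ hD] tau0; apply: specnorm_le_sparse => // [i j j' jj'|i i' j ii'|i j]; rewrite !mxE.
- case: eqP => [ij|]; last by rewrite mul0r.
  by case: eqP => [ij'|]; rewrite ?mulr0 //; case/eqP: jj'; apply: val_inj; rewrite /= -ij -ij'.
- case: eqP => [ij|]; last by rewrite mul0r.
  by case: eqP => [i'j|]; rewrite ?mulr0 //; case/eqP: ii'; apply: val_inj; rewrite /= ij i'j.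
- case: eqP => [/hD Dij|_]; last by rewrite normr0.
  by rewrite ger0_norm ?ge_min ?lexx ?orbT // le_min Dij tau0.
Qed.

End SpectralNorm.

Section BallProjection.
Variable R : rcfType.
Implicit Types (r : R) (n : nat).

Definition ball_coef n r (a0 q : 'cV[R]_n) : R :=
  if vnorm (q - a0) <= r then 1 else r / vnorm (q - a0).

Definition ball_proj n r (a0 q : 'cV[R]_n) : 'cV[R]_n :=
  a0 + ball_coef r a0 q *: (q - a0).

Lemma ball_coef_ge0 n r (a0 q : 'cV[R]_n) : 0 <= r -> 0 <= ball_coef r a0 q.
Proof. by move=> r0; rewrite /ball_coef; case: ifP; rewrite ?ler01 ?divr_ge0 ?vnorm_ge0. Qed.

Lemma ball_coef_le1 n r (a0 q : 'cV[R]_n) : 0 <= r -> ball_coef r a0 q <= 1.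
Proof.
move=> r0; rewrite /ball_coef; case: ifPn => //; rewrite -ltNge => rq.
by rewrite ler_pdivrMr ?mul1r ?ltW // (le_lt_trans r0).
Qed.

Lemma vnorm_ball_proj_sub n r (a0 q : 'cV[R]_n) : 0 <= r ->
  vnorm (ball_proj r a0 q - a0) <= r.
Proof.
move=> r0; rewrite /ball_proj addrC addKr vnormZ ger0_norm ?ball_coef_ge0 //.
rewrite /ball_coef; case: ifPn; rewrite ?mul1r // -ltNge => rq.
by rewrite mulfVK // gt_eqF // (le_lt_trans r0).
Qed.

Lemma vnorm2_scale_sub_le n (t : R) (w c : 'cV[R]_n) : 0 <= t <= 1 ->
  vnorm c <= t * vnorm w -> vnorm2 (t *: w - c) <= vnorm2 (w - c).
Proof.
move=> /andP[t0 t1] ctw.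
have -> : w - c = 1 *: w + (-1) *: c by rewrite scale1r scaleN1r.
rewrite -scaleN1r !vnorm2_lincomb -!sqr_vnorm.
have wc : vdot w c <= t * vnorm w ^+ 2.
  by rewrite (le_trans (vdot_le w c)) // expr2 mulrCA ler_wpM2l ?vnorm_ge0.
have : 0 <= (1 - t) * (t * vnorm w ^+ 2 - vdot w c) by rewrite mulr_ge0 ?subr_ge0.
(* the gap is [2 (1 - t) (t |w|^2 - <w, c>) + ((1 - t) |w|)^2] *)
have := sqr_ge0 ((1 - t) * vnorm w).
move: (vnorm w) (vnorm c) (vdot w c) => a b x; nra.
Qed.

Lemma ball_proj_dist_le n r (a0 a q : 'cV[R]_n) : vnorm (a - a0) <= r ->
  vnorm2 (ball_proj r a0 q - a) <= vnorm2 (q - a).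
Proof.
move=> ar; have r0 : 0 <= r := le_trans (vnorm_ge0 _) ar.
have shift t : a0 + t *: (q - a0) - a = t *: (q - a0) - (a - a0).
  by rewrite opprB (addrC a0) addrA.
have -> : q - a = a0 + 1 *: (q - a0) - a by rewrite scale1r (addrC a0) subrK.
rewrite /ball_proj !shift scale1r; have [qr|] := lerP (vnorm (q - a0)) r.
  by rewrite /ball_coef qr scale1r.
move=> rq; apply: vnorm2_scale_sub_le; first by rewrite ball_coef_ge0 ?ball_coef_le1.
rewrite /ball_coef ifN -?ltNge // mulfVK //.
by rewrite gt_eqF // (le_lt_trans r0).
Qed.

Lemma proj_colsE d k (Q A0 : 'M[R]_(d, k)) r :
  proj_cols Q A0 r = A0 + (Q - A0) *m diag_mx (\row_j ball_coef r (col j A0) (col j Q)).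
Proof.
apply/matrixP => i j; rewrite mul_mx_diag !mxE /ball_coef.
by case: ifP => _; rewrite !mxE; ring.
Qed.

Lemma col_proj_cols d k (Q A0 : 'M[R]_(d, k)) r j :
  col j (proj_cols Q A0 r) = ball_proj r (col j A0) (col j Q).
Proof.
by apply/matrixP => i l; rewrite proj_colsE mul_mx_diag !mxE mulrC.
Qed.

Lemma frob2_proj_cols_le d k (Q A0 A : 'M[R]_(d, k)) r :
  (forall j, vnorm (col j A - col j A0) <= r) ->
  frob2 (proj_cols Q A0 r - A) <= frob2 (Q - A).
Proof.
move=> hA; rewrite !frob2_col; apply: ler_sum => j _.
by rewrite !linearB /= col_proj_cols ball_proj_dist_le.
Qed.

Lemma specnorm_le_proj_cols d k (Q A0 : 'M[R]_(d, k)) r (tau : R) : 0 <= r -> 0 <= tau ->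
  specnorm_le Q tau -> specnorm_le A0 tau -> specnorm_le (proj_cols Q A0 r) (3 * tau).
Proof.
move=> r0 tau0 hQ hA0; rewrite proj_colsE.
have -> : 3 * tau = tau + (tau + tau) * 1 by ring.
apply: specnorm_leD => //; apply: specnorm_le_mulmx.
- by rewrite addr_ge0.
- by apply: specnorm_leD => //; apply: specnorm_leN.
apply: specnorm_le_diag_mx => // j; rewrite mxE ger0_norm ?ball_coef_ge0 //.
exact: ball_coef_le1.
Qed.

End BallProjection.

Section TruncatedSVD.
Variable R : rcfType.
Variables (d k : nat) (U : 'M[R]_d) (V : 'M[R]_k) (D : 'M[R]_(d, k)) (tau : R).
Hypotheses (orthU : orth_mx U) (orthV : orth_mx V) (diagD : nonneg_diag D).
Hypothesis tau_ge0 : 0 <= tau.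

Lemma specnorm_le_clip_svd : specnorm_le (U *m clip_diag D tau *m V^T) tau.
Proof.
suff : specnorm_le (U *m clip_diag D tau *m V^T) (1 * tau * 1).
  by rewrite mul1r mulr1.
apply: specnorm_le_mulmx; rewrite ?mulr_ge0 //.
  apply: specnorm_le_mulmx => //; last exact: specnorm_le_clip_diag.
  by apply: specnorm_le_orthmx; case: orthU.
by apply: specnorm_le_orthmx; rewrite trmxK; case: orthV.
Qed.

Lemma sqr_min_sub_le (x b : R) : b <= tau -> (Num.min x tau - b) ^+ 2 <= (x - b) ^+ 2.
Proof. by move=> btau; rewrite minEle; case: ifPn => //; rewrite -ltNge => taux; nra. Qed.

Lemma frob2_clip_svd_le (A : 'M[R]_(d, k)) : specnorm_le A tau ->
  frob2 (U *m clip_diag D tau *m V^T - A) <= frob2 (U *m D *m V^T - A).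
Proof.
move: orthU orthV diagD => [UUt UtU] [VVt VtV] [Doff _] hA.
pose B := U^T *m A *m V.
have AE : A = U *m B *m V^T by rewrite /B !mulmxA UUt mul1mx -mulmxA VVt mulmx1.
have hB : specnorm_le B tau.
  suff : specnorm_le (U^T *m (A *m V)) (1 * (tau * 1)) by rewrite mulmxA mul1r mulr1.
  apply: specnorm_le_mulmx; rewrite ?ler01 //; first by apply: specnorm_le_orthmx; rewrite trmxK.
  by apply: specnorm_le_mulmx => //; apply: specnorm_le_orthmx.
clearbody B.
have frob2_UV X : frob2 (U *m X *m V^T) = frob2 X.
  by rewrite frob2_orthmxr ?trmxK // frob2_orthmxl.
rewrite AE -!mulmxBl -!mulmxBr !frob2_UV.
apply: ler_sum => i _; apply: ler_sum => j _; rewrite !mxE.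
case: eqP => [_|/Doff ->]; last by [].
by apply: sqr_min_sub_le; apply: le_trans (ler_norm _) (normr_entry_le_specnorm _ _ hB).
Qed.

End TruncatedSVD.

Theorem mainTheorem10 (R : rcfType) (d k : nat) (A A0 At : 'M[R]_(d, k))
  (eta0 eta1 : R) (U : 'M[R]_d) (D : 'M[R]_(d, k)) (V : 'M[R]_k) :
  0 < eta0 -> 0 < eta1 ->
  specnorm_le A (tauv d k eta1) ->
  specnorm_le A0 (tauv d k eta1) ->
  (forall i : 'I_k, vnorm (col i A0 - col i A) <= radius d k eta0) ->
  orth_mx U -> orth_mx V -> nonneg_diag D -> At = U *m D *m V^T ->
  let Q := U *m clip_diag D (tauv d k eta1) *m V^T in
  let Ah := proj_cols Q A0 (radius d k eta0) in
  [/\ frob (Ah - A) <= 2 * frob (At - A),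
      (forall i : 'I_k, vnorm (col i Ah - col i A) <= 2 * radius d k eta0)
    & specnorm_le Ah (3 * tauv d k eta1)].
Proof.
move=> eta0_gt0 eta1_gt0 hA hA0 hA0A orthU orthV diagD -> Q Ah.
have r_ge0 : 0 <= radius d k eta0.
  by rewrite /radius divr_ge0 ?mulr_ge0 ?sqrtr_ge0 ?ler0n ?ltW.
have tau_ge0 : 0 <= tauv d k eta1 by rewrite /tauv mulr_ge0 ?sqrtr_ge0 ?ltW.
have hAA0 j : vnorm (col j A - col j A0) <= radius d k eta0 by rewrite vnorm_subC.
split.
- apply: (@le_trans _ _ (frob (U *m D *m V^T - A))); last first.
    by rewrite ler_peMl ?sqrtr_ge0 ?ler1n.
  rewrite ler_sqrt ?frob2_ge0 // -/(frob2 _) -/(frob2 _).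
  exact: le_trans (frob2_proj_cols_le _ hAA0) (frob2_clip_svd_le orthU orthV diagD tau_ge0 hA).
- move=> j; rewrite -(subrK (col j A0) (col j Ah)) -addrA.
  apply: le_trans (vnormD_le _ _) _; rewrite mulr2n mulrDl mul1r lerD //.
  by rewrite col_proj_cols vnorm_ball_proj_sub.
- exact: specnorm_le_proj_cols r_ge0 tau_ge0 (specnorm_le_clip_svd orthU orthV diagD tau_ge0) hA0.
Qed.
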